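(* Let $\mathcal{S}$ be an $E$-unitary inverse semigroupoid, let $\theta$ be the Munn action of $\mathcal{S}$ on $E(\mathcal{S})$, and let $\alpha$ be the induced ordered partial action of $\mathcal{S}/\sigma$ on $E(\mathcal{S})$. Then the map $\phi:\mathcal{S}\to\mathcal{S}/\sigma\ltimes_\alpha E(\mathcal{S})$, $\phi(s)=(\pi_\sigma(s),s^*s)$, is an isomorphism of semigroupoids; in particular $\mathcal{S}\cong\mathcal{S}/\sigma\ltimes_\alpha E(\mathcal{S})$.
   Context: Inverse semigroupoid: arrows $\mathcal{S}$, objects $\mathcal{S}^{(0)}$, maps $d,c$, associative multiplication on $\mathcal{S}^{(2)}=\{(s,t):d(s)=c(t)\}$ with $d(st)=d(t)$, $c(st)=c(s)$, unique $s^*$ with $ss^*s=s$, $s^*ss^*=s^*$; $E(\mathcal{S})$ = idempotents (a semilatticeoid: idempotents over the same object commute and their product is their meet), ordered by the natural order: for parallel $s,t$, $s\leqslant t$ iff $s=te$ for an idempotent $e$ with $(t,e)\in\mathcal{S}^{(2)}$. $(s,t)\in\sigma$ iff some $r\leqslant s,t$; $\mathcal{S}/\sigma$ is the groupoid of $\sigma$-classes $\pi_\sigma(s)$ with $d(\pi_\sigma(s))=d(s)$, $c(\pi_\sigma(s))=c(s)$, $\pi_\sigma(s)\pi_\sigma(t)=\pi_\sigma(st)$, $\pi_\sigma(s)^*=\pi_\sigma(s^* )$. $E$-unitary: $(s,e)\in\sigma$, $e$ idempotent imply $s$ idempotent. A morphism of semigroupoids $\varphi$ maps composable pairs to composable pairs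 with $\varphi(st)=\varphi(s)\varphi(t)$; an isomorphism is a bijective morphism whose inverse is a morphism. Munn action: $X_s=\{e\in E(\mathcal{S}):e\leqslant ss^*\}$, $\theta_s:X_{s^*}\to X_s$, $\theta_s(e)=ses^*$. Induced action of $\mathcal{S}/\sigma$: $D_{\pi_\sigma(s)}=\bigcup_{t:(s,t)\in\sigma}X_t$ and $\alpha_{\pi_\sigma(s)}:D_{\pi_\sigma(s^* )}\to D_{\pi_\sigma(s)}$, $\alpha_{\pi_\sigma(s)}(e)=\theta_t(e)$ for any $t$ with $(s,t)\in\sigma$ and $e\in X_{t^*}$. Semidirect product of a groupoid $\mathcal{G}$ acting partially by $\alpha=(\{D_g\},\{\alpha_g\})$ on a semilatticeoid $Y$: $\mathcal{G}\ltimes_\alpha Y=\{(g,y): y\in D_{g^*}\}$, objects $\mathcal{G}^{(0)}\times Y^{(0)}$, $d(g,y)=(d(g),d(y))$, $c(g,y)=(c(g),c(\alpha_g(y)))$, product $(g,x)(h,y)=(gh,\alpha_{h^*}(x\,\alpha_h(y)))$ defined when $(g,h)$ composable and $(x,\alpha_h(y))\in Y^{(2)}$ (i.e. over the same object). *)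

From Stdlib Require Import Classical ClassicalEpsilon FunctionalExtensionality PropExtensionality.

Set Implicit Arguments.

(* [mul] is a total function; only its values on composable pairs
   (dom s = cod t) are meaningful. *)
Record InvSemigroupoid := {
  arr : Type;
  obj : Type;
  dom : arr -> obj;
  cod : arr -> obj;
  mul : arr -> arr -> arr;
  mul_dom : forall s t, dom s = cod t -> dom (mul s t) = dom t;
  mul_cod : forall s t, dom s = cod t -> cod (mul s t) = cod s;
  mul_assoc : forall r s t, dom r = cod s -> dom s = cod t ->
      mul r (mul s t) = mul (mul r s) t;
  star : arr -> arr;
  star_dom : forall s, dom s = cod (star s);
  star_cod : forall s, dom (star s) = cod s;
  star_l : forall s, mul (mul s (star s)) s = s;
  star_r : forall s, mul (mul (star s) s) (star s) = star s;
  star_uniq : forall s u, dom s = cod u -> dom u = cod s ->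
      mul (mul s u) s = s -> mul (mul u s) u = u -> u = star s
}.

Section Defs.
Variable S : InvSemigroupoid.

Definition idempotent (e : arr S) : Prop :=
  dom S e = cod S e /\ mul S e e = e.

Definition nat_le (s t : arr S) : Prop :=
  dom S s = dom S t /\ cod S s = cod S t /\
  exists e, idempotent e /\ dom S t = cod S e /\ s = mul S t e.

Definition sigma_rel (s t : arr S) : Prop :=
  exists r, nat_le r s /\ nat_le r t.

Definition E_unitary : Prop :=
  forall s e, idempotent e -> sigma_rel s e -> idempotent s.

Definition Xset (s : arr S) (e : arr S) : Prop :=
  idempotent e /\ nat_le e (mul S s (star S s)).

Definition theta (s e : arr S) : arr S := mul S (mul S s e) (star S s).

Definition sigma_class (s : arr S) : arr S -> Prop := fun t => sigma_rel s t.

Definition qarr : Type := { X : arr S -> Prop | exists s, X = sigma_class s }.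

Definition pi_sigma (s : arr S) : qarr :=
  exist _ (sigma_class s) (ex_intro _ s eq_refl).

Definition qrep (g : qarr) : arr S :=
  proj1_sig (constructive_indefinite_description _ (proj2_sig g)).

Definition qdom (g : qarr) : obj S := dom S (qrep g).
Definition qcod (g : qarr) : obj S := cod S (qrep g).
Definition qmul (g h : qarr) : qarr := pi_sigma (mul S (qrep g) (qrep h)).
Definition qstar (g : qarr) : qarr := pi_sigma (star S (qrep g)).

Definition Dset (g : qarr) (e : arr S) : Prop :=
  exists t, proj1_sig g t /\ Xset t e.

(* alpha_g(e) = theta_t(e) for any t in g with e in X_{t*} (well defined by
   the paper); outside the domain an arbitrary junk value (e) is returned. *)
Definition alpha (g : qarr) (e : arr S) : arr S :=
  match excluded_middle_informative
          (exists t, proj1_sig g t /\ Xset (star S t) e) with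
  | left H => theta (proj1_sig (constructive_indefinite_description _ H)) e
  | right _ => e
  end.

Definition sdarr : Type := { p : qarr * arr S | Dset (qstar (fst p)) (snd p) }.

Definition sdobj : Type := (obj S * obj S)%type.

Definition sddom (p : sdarr) : sdobj :=
  (qdom (fst (proj1_sig p)), dom S (snd (proj1_sig p))).
Definition sdcod (p : sdarr) : sdobj :=
  (qcod (fst (proj1_sig p)), cod S (alpha (fst (proj1_sig p)) (snd (proj1_sig p)))).

Definition sdmul_raw (p q : qarr * arr S) : qarr * arr S :=
  let (g, x) := p in let (h, y) := q in
  (qmul g h, alpha (qstar h) (mul S x (alpha h y))).

(* The product lands in the semidirect product on composable pairs (paper);
   elsewhere a junk value (the first argument) is returned. *)
Definition sdmul (p q : sdarr) : sdarr :=
  match excluded_middle_informative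
          (Dset (qstar (fst (sdmul_raw (proj1_sig p) (proj1_sig q))))
                (snd (sdmul_raw (proj1_sig p) (proj1_sig q)))) with
  | left H => exist _ (sdmul_raw (proj1_sig p) (proj1_sig q)) H
  | right _ => p
  end.

End Defs.

Definition is_sg_morphism {A B OA OB : Type}
  (dA cA : A -> OA) (mA : A -> A -> A)
  (dB cB : B -> OB) (mB : B -> B -> B) (f : A -> B) : Prop :=
  forall s t, dA s = cA t -> dB (f s) = cB (f t) /\ f (mA s t) = mB (f s) (f t).

Definition is_sg_isomorphism {A B OA OB : Type}
  (dA cA : A -> OA) (mA : A -> A -> A)
  (dB cB : B -> OB) (mB : B -> B -> B) (f : A -> B) : Prop :=
  is_sg_morphism dA cA mA dB cB mB f /\
  exists g : B -> A, (forall a, g (f a) = a) /\ (forall b, f (g b) = b) /\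
    is_sg_morphism dB cB mB dA cA mA g.

(* In an E-unitary inverse semigroupoid an arrow is determined by its
   sigma-class and its source idempotent: if (s, t) is in sigma then s t* is
   idempotent, which forces s (t* t) = t (s* s), so s = t as soon as
   s* s = t* t.  Every arrow (g, x) of the semidirect product has x <= t t* for
   some t in the class of g^-1, and is the image of t* x.  The Munn action
   carries s* s to s s*, which makes s |-> (pi s, s* s) multiplicative; it also
   reflects composability, so its inverse is a morphism as well. *)
From Stdlib Require Import ClassicalEpsilon FunctionalExtensionality.
From Stdlib Require Import PropExtensionality ProofIrrelevance.

Set Implicit Arguments.

Lemma bijective_morphism_isomorphism {A B OA OB : Type}
  (dA cA : A -> OA) (mA : A -> A -> A) (dB cB : B -> OB) (mB : B -> B -> B)
  (f : A -> B) :
  is_sg_morphism dA cA mA dB cB mB f ->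
  (forall s t, dB (f s) = cB (f t) -> dA s = cA t) ->
  (forall s t, f s = f t -> s = t) ->
  (forall b, exists a, f a = b) ->
  is_sg_isomorphism dA cA mA dB cB mB f.
Proof.
  intros Hf Hreflect Hinj Hsurj.
  pose (g b := proj1_sig (constructive_indefinite_description _ (Hsurj b))).
  assert (fK : forall b, f (g b) = b)
    by (intro b; exact (proj2_sig (constructive_indefinite_description _ (Hsurj b)))).
  split; [exact Hf|]. exists g.
  split; [intro a; apply Hinj, fK|]. split; [exact fK|].
  intros b1 b2 Hb. rewrite <- (fK b1), <- (fK b2) in Hb. apply Hreflect in Hb.
  split; [exact Hb|].
  apply Hinj. destruct (Hf _ _ Hb) as [_ ->]. rewrite !fK. reflexivity.
Qed.

(* [objs] closes equations between sources and targets of products and stars;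
   [assoc_l] brings a composable product to left-associated normal form. *)
Ltac objs := repeat (first [ rewrite mul_dom by objs | rewrite mul_cod by objs
                           | rewrite star_cod | rewrite <- star_dom ]);
             first [reflexivity | congruence].

Ltac assoc_l := repeat (rewrite mul_assoc by objs).

Section InverseSemigroupoid.
Variable S : InvSemigroupoid.
Local Notation m := (mul S).
Local Notation st := (star S).
Local Notation d := (dom S).
Local Notation c := (cod S).

Lemma star_involutive s : st (st s) = s.
Proof. symmetry; apply star_uniq; [objs | objs | apply star_r | apply star_l]. Qed.

Lemma star_idempotent e : idempotent S e -> st e = e.
Proof.
  intros [He1 He2]. symmetry; apply star_uniq; try congruence; rewrite !He2; reflexivity.
Qed.

Lemma idempotent_mul_star s : idempotent S (m s (st s)).
Proof.
  split; [objs|].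
  rewrite (mul_assoc S (m s (st s)) s (st s)) by objs. now rewrite star_l.
Qed.

Lemma idempotent_star_mul s : idempotent S (m (st s) s).
Proof. pose proof (idempotent_mul_star (st s)) as H. now rewrite star_involutive in H. Qed.

Lemma mul_idempotentK a f : idempotent S f -> d a = c f -> m (m a f) f = m a f.
Proof. intros [Hf1 Hf2] Ha. rewrite <- mul_assoc by objs. now rewrite Hf2. Qed.

Lemma idempotent_mul e f : idempotent S e -> idempotent S f -> d e = d f ->
  idempotent S (m e f).
Proof.
  intros He Hf Hd. pose proof He as [He1 He2]. pose proof Hf as [Hf1 Hf2].
  (* f x e is another inverse of e f, hence equal to x, and from that shape x is
     seen to be idempotent; then e f = x* = x. *)
  set (x := st (m e f)).
  assert (Hx : m (m x (m e f)) x = x) by apply star_r.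
  assert (Hfxe : m (m f (m (m x (m e f)) x)) e = m (m f x) e) by now rewrite Hx.
  assert (fxe_star : m (m f x) e = x).
  { subst x; apply star_uniq; try objs; assoc_l;
      rewrite !mul_idempotentK by (auto; objs).
    - rewrite <- (mul_assoc S _ e f) by objs. apply star_l.
    - rewrite <- Hfxe at 2. assoc_l. reflexivity. }
  assert (Hxx : m x x = x).
  { transitivity (m (m (m f x) e) (m (m f x) e)); [now rewrite fxe_star|].
    transitivity (m (m f (m (m x (m e f)) x)) e); [subst x; assoc_l; reflexivity|].
    now rewrite Hfxe. }
  assert (Hxi : idempotent S x) by (split; [subst x; objs | exact Hxx]).
  replace (m e f) with x; [exact Hxi|].
  rewrite <- (star_involutive (m e f)). fold x. symmetry; apply star_idempotent, Hxi.
Qed.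

Lemma idempotent_comm e f : idempotent S e -> idempotent S f -> d e = d f ->
  m e f = m f e.
Proof.
  intros He Hf Hd. pose proof He as [He1 He2]. pose proof Hf as [Hf1 Hf2].
  rewrite <- (star_idempotent (idempotent_mul He Hf Hd)) at 1.
  symmetry; apply star_uniq; try objs; assoc_l;
    rewrite !mul_idempotentK by (auto; objs).
  - rewrite <- (mul_assoc S (m e f) e f) by objs. apply idempotent_mul; auto.
  - rewrite <- (mul_assoc S (m f e) f e) by objs. apply idempotent_mul; auto.
Qed.

Lemma star_mul s t : d s = c t -> st (m s t) = m (st t) (st s).
Proof.
  intro H. symmetry; apply star_uniq; try objs.
  - transitivity (m (m s (m (m t (st t)) (m (st s) s))) t); [assoc_l; reflexivity|].
    rewrite (idempotent_comm (idempotent_mul_star t) (idempotent_star_mul s)) by objs.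
    assoc_l. rewrite star_l, <- (mul_assoc S s t (st t)) by objs.
    rewrite <- (mul_assoc S s (m t (st t)) t) by objs. now rewrite star_l.
  - transitivity (m (m (st t) (m (m (st s) s) (m t (st t)))) (st s)); [assoc_l; reflexivity|].
    rewrite <- (idempotent_comm (idempotent_mul_star t) (idempotent_star_mul s)) by objs.
    assoc_l. rewrite star_r, <- (mul_assoc S (st t) (st s) s) by objs.
    rewrite <- (mul_assoc S (st t) (m (st s) s) (st s)) by objs. now rewrite star_r.
Qed.

Lemma idempotent_shift f t : idempotent S f -> d f = c t ->
  m f t = m t (m (m (st t) f) t).
Proof.
  intros Hf H. pose proof Hf as [Hf1 Hf2].
  transitivity (m (m (m t (st t)) f) t); [|assoc_l; reflexivity].
  rewrite (idempotent_comm (idempotent_mul_star t) Hf) by objs.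
  rewrite <- (mul_assoc S f (m t (st t)) t) by objs. now rewrite star_l.
Qed.

Lemma idempotent_conj f t : idempotent S f -> d f = c t ->
  idempotent S (m (m (st t) f) t).
Proof.
  intros Hf H. pose proof Hf as [Hf1 Hf2]. split; [objs|].
  transitivity (m (m (st t) (m (m f (m t (st t))) f)) t); [assoc_l; reflexivity|].
  rewrite <- (idempotent_comm (idempotent_mul_star t) Hf) by objs.
  assoc_l. rewrite star_r, mul_idempotentK; auto; objs.
Qed.

Lemma nat_le_refl s : nat_le S s s.
Proof.
  split; [reflexivity | split; [reflexivity|]]. exists (m (st s) s).
  split; [apply idempotent_star_mul|]. split; [objs|]. assoc_l. now rewrite star_l.
Qed.

Lemma nat_le_mul_idempotent t f : idempotent S f -> d t = c f -> nat_le S (m t f) t.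
Proof.
  intros Hf H. pose proof Hf as [Hf1 Hf2]. split; [objs | split; [objs|]]. now exists f.
Qed.

Lemma nat_le_restrict s t : nat_le S s t -> s = m t (m (st s) s).
Proof.
  intros [Hd [Hc [e [He [Hte ->]]]]]. pose proof He as [He1 He2].
  rewrite star_mul, (star_idempotent He) by objs.
  transitivity (m t (m (m e (m (st t) t)) e)); [|assoc_l; reflexivity].
  rewrite (idempotent_comm He (idempotent_star_mul t)) by objs.
  assoc_l. rewrite star_l, mul_idempotentK; auto; objs.
Qed.

Lemma nat_le_idempotent e f : idempotent S e -> idempotent S f -> nat_le S e f ->
  m f e = e /\ m e f = e.
Proof.
  intros He Hf [Hd [Hc [g [Hg [Hfg ->]]]]].
  pose proof Hf as [Hf1 Hf2]. pose proof Hg as [Hg1 Hg2]. split.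
  - rewrite mul_assoc by objs. now rewrite Hf2.
  - rewrite <- mul_assoc, (idempotent_comm Hg Hf), mul_assoc by objs. now rewrite Hf2.
Qed.

Lemma nat_le_mul a b x y : nat_le S a b -> nat_le S x y -> d b = c y ->
  nat_le S (m a x) (m b y).
Proof.
  intros [Da [Ca [e [He [Hbe ->]]]]] [Dx [Cx [g [Hg [Hyg ->]]]]] H.
  pose proof He as [He1 He2]. pose proof Hg as [Hg1 Hg2].
  replace (m (m b e) (m y g)) with (m (m b (m e y)) g) by (assoc_l; reflexivity).
  rewrite (idempotent_shift y He) by objs.
  replace (m (m b (m y (m (m (st y) e) y))) g)
    with (m (m b y) (m (m (m (st y) e) y) g)) by (assoc_l; reflexivity).
  apply nat_le_mul_idempotent; [|objs].
  apply idempotent_mul; [apply idempotent_conj | |]; auto; objs.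
Qed.

Lemma nat_le_star r s : nat_le S r s -> nat_le S (st r) (st s).
Proof.
  intros [Dr [Cr [e [He [Hse ->]]]]]. pose proof He as [He1 He2].
  rewrite star_mul, (star_idempotent He), (idempotent_shift (st s) He) by objs.
  apply nat_le_mul_idempotent; [apply idempotent_conj|]; auto; objs.
Qed.

Lemma sigma_rel_par s t : sigma_rel S s t -> d s = d t /\ c s = c t.
Proof. intros [r [[H1 [H2 _]] [H3 [H4 _]]]]. split; congruence. Qed.

Lemma sigma_rel_refl s : sigma_rel S s s.
Proof. exists s. split; apply nat_le_refl. Qed.

Lemma sigma_rel_sym s t : sigma_rel S s t -> sigma_rel S t s.
Proof. intros [r [H1 H2]]. now exists r. Qed.

(* For r1 <= a, b and r2 <= b, e, the arrow r1 (r2* r2) lies below a, and it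
   equals r2 (r1* r1) since both are b (r1* r1) (r2* r2); hence it lies below e. *)
Lemma sigma_rel_trans a b e : sigma_rel S a b -> sigma_rel S b e -> sigma_rel S a e.
Proof.
  intros [r1 [Ha1 Hb1]] [r2 [Hb2 He2]].
  pose proof (nat_le_restrict Ha1) as Ea. pose proof (nat_le_restrict Hb1) as Eb.
  pose proof (nat_le_restrict Hb2) as Eb'. pose proof (nat_le_restrict He2) as Ee.
  destruct Ha1 as [Da1 [Ca1 _]], Hb1 as [Db1 [Cb1 _]].
  destruct Hb2 as [Db2 [Cb2 _]], He2 as [De2 [Ce2 _]].
  exists (m r1 (m (st r2) r2)). split.
  - rewrite Ea at 1. rewrite <- mul_assoc by objs.
    apply nat_le_mul_idempotent; [apply idempotent_mul; try apply idempotent_star_mul|]; objs.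
  - rewrite Eb at 1.
    rewrite <- mul_assoc, (idempotent_comm (idempotent_star_mul r1) (idempotent_star_mul r2)),
      mul_assoc, <- Eb' by objs.
    rewrite Ee at 1. rewrite <- mul_assoc by objs.
    apply nat_le_mul_idempotent; [apply idempotent_mul; try apply idempotent_star_mul|]; objs.
Qed.

Lemma sigma_rel_star s t : sigma_rel S s t -> sigma_rel S (st s) (st t).
Proof. intros [r [H1 H2]]. exists (st r). split; apply nat_le_star; assumption. Qed.

Lemma sigma_rel_mul s s' t t' : sigma_rel S s s' -> sigma_rel S t t' -> d s = c t ->
  sigma_rel S (m s t) (m s' t').
Proof.
  intros [r [H1 H2]] [q [H3 H4]] H.
  pose proof H1 as [A1 [A2 _]]. pose proof H2 as [A3 [A4 _]].
  pose proof H3 as [A5 [A6 _]]. pose proof H4 as [A7 [A8 _]].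
  exists (m r q). split; apply nat_le_mul; auto; congruence.
Qed.

Lemma pi_sigma_eq s t : sigma_rel S s t -> pi_sigma S s = pi_sigma S t.
Proof.
  intro H. apply subset_eq_compat, functional_extensionality; intro u.
  apply propositional_extensionality; split; intro H'.
  - exact (sigma_rel_trans (sigma_rel_sym H) H').
  - exact (sigma_rel_trans H H').
Qed.

Lemma qrep_class g : proj1_sig g = sigma_class S (qrep g).
Proof. exact (proj2_sig (constructive_indefinite_description _ (proj2_sig g))). Qed.

Lemma pi_sigma_qrep g : pi_sigma S (qrep g) = g.
Proof.
  destruct g as [X HX]. apply subset_eq_compat. symmetry. exact (qrep_class (exist _ X HX)).
Qed.

Lemma sigma_rel_qrep s : sigma_rel S s (qrep (pi_sigma S s)).
Proof.
  pose proof (qrep_class (pi_sigma S s)) as H; simpl in H.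
  change (sigma_class S s (qrep (pi_sigma S s))). rewrite H. apply sigma_rel_refl.
Qed.

Lemma qdom_pi s : qdom (pi_sigma S s) = d s.
Proof. symmetry. exact (proj1 (sigma_rel_par (sigma_rel_qrep s))). Qed.

Lemma qcod_pi s : qcod (pi_sigma S s) = c s.
Proof. symmetry. exact (proj2 (sigma_rel_par (sigma_rel_qrep s))). Qed.

Lemma qmul_pi s t : d s = c t -> qmul (pi_sigma S s) (pi_sigma S t) = pi_sigma S (m s t).
Proof.
  intro H. apply pi_sigma_eq, sigma_rel_mul; try apply sigma_rel_sym, sigma_rel_qrep.
  change (qdom (pi_sigma S s) = qcod (pi_sigma S t)). now rewrite qdom_pi, qcod_pi.
Qed.

Lemma qstar_pi s : qstar (pi_sigma S s) = pi_sigma S (st s).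
Proof. apply pi_sigma_eq, sigma_rel_star, sigma_rel_sym, sigma_rel_qrep. Qed.

Lemma Xset_star_mul s : Xset S (st s) (m (st s) s).
Proof. split; [apply idempotent_star_mul|]. rewrite star_involutive. apply nat_le_refl. Qed.

Lemma Dset_qstar_pi s : Dset (qstar (pi_sigma S s)) (m (st s) s).
Proof.
  rewrite qstar_pi. exists (st s). split; [apply sigma_rel_refl | apply Xset_star_mul].
Qed.

Definition to_semidirect s : sdarr S :=
  exist (fun p => Dset (qstar (fst p)) (snd p)) (pi_sigma S s, m (st s) s) (Dset_qstar_pi s).

Lemma sddom_to_semidirect s : sddom (to_semidirect s) = (d s, d s).
Proof. unfold sddom; simpl. rewrite qdom_pi. f_equal. objs. Qed.

Lemma to_semidirect_surjective b : exists a, to_semidirect a = b.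
Proof.
  destruct b as [[g x] Hgx]. pose proof Hgx as [t [Ht [Hx Hxt]]]. simpl in *.
  change (sigma_rel S (st (qrep g)) t) in Ht.
  pose proof Hx as [Hx1 Hx2]. pose proof Hxt as [Q1 [Q2 _]].
  assert (Q1' : d x = c t) by (rewrite Q1; objs).
  assert (Q2' : c x = c t) by (rewrite Q2; objs).
  exists (m (st t) x). apply subset_eq_compat. f_equal.
  - rewrite <- (pi_sigma_qrep g). apply pi_sigma_eq, sigma_rel_trans with (st t).
    + exists (m (st t) x).
      split; [apply nat_le_refl | apply nat_le_mul_idempotent; auto; objs].
    + rewrite <- (star_involutive (qrep g)). exact (sigma_rel_star (sigma_rel_sym Ht)).
  - rewrite star_mul, star_involutive, (star_idempotent Hx) by objs.
    transitivity (m (m x (m t (st t))) x); [assoc_l; reflexivity|].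
    rewrite (proj2 (nat_le_idempotent Hx (idempotent_mul_star t) Hxt)). exact Hx2.
Qed.

Section EUnitary.
Hypothesis HE : E_unitary S.

Lemma sigma_rel_mul_star s t : sigma_rel S s t -> idempotent S (m s (st t)).
Proof.
  intros [r [H1 H2]]. pose proof H1 as [A1 [A2 _]]. pose proof H2 as [A3 [A4 _]].
  apply HE with (e := m r (st r)); [apply idempotent_mul_star|].
  exists (m r (st r)). split; [|apply nat_le_refl].
  apply nat_le_mul; [| apply nat_le_star |]; auto; objs.
Qed.

(* s t* is idempotent, hence equal to its own inverse t s*. *)
Lemma sigma_rel_restrict s t : sigma_rel S s t -> m s (m (st t) t) = m t (m (st s) s).
Proof.
  intro Hst. pose proof (sigma_rel_mul_star Hst) as Hf.
  destruct (sigma_rel_par Hst) as [P1 P2].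
  pose proof (star_idempotent Hf) as Hf'.
  rewrite star_mul, star_involutive in Hf' by objs. destruct Hf as [Hf1 Hf2].
  transitivity (m (m (m s (st s)) s) (m (st t) t)); [now rewrite star_l|].
  transitivity (m s (m (m (st s) s) (m (st t) t))); [assoc_l; reflexivity|].
  rewrite (idempotent_comm (idempotent_star_mul s) (idempotent_star_mul t)) by objs.
  transitivity (m (m (m s (st t)) (m t (st s))) s); [assoc_l; reflexivity|].
  rewrite Hf', Hf2, <- Hf', <- mul_assoc by objs. reflexivity.
Qed.

(* Every representative u of the class with x in X_{u*} gives the same value:
   u x = v x because x lies below both u* u and v* v. *)
Lemma alpha_pi v x : Xset S (st v) x -> alpha (pi_sigma S v) x = theta S v x.
Proof.
  intros Hv. unfold alpha. destruct (excluded_middle_informative _) as [H|H].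
  - destruct (constructive_indefinite_description _ H) as [u [Hu [Hx Hxu]]]; simpl in *.
    change (sigma_rel S v u) in Hu. destruct Hv as [_ Hxv].
    rewrite star_involutive in Hxu, Hxv.
    pose proof Hx as [Hx1 Hx2]. destruct (sigma_rel_par Hu) as [P1 P2].
    destruct (nat_le_idempotent Hx (idempotent_star_mul u) Hxu) as [U1 _].
    destruct (nat_le_idempotent Hx (idempotent_star_mul v) Hxv) as [V1 _].
    destruct Hxv as [Q1 [Q2 _]].
    assert (Q1' : d x = d v) by (rewrite Q1; objs).
    assert (Q2' : c x = d v) by (rewrite Q2; objs).
    assert (Hux : m u x = m v x).
    { rewrite <- V1 at 1.
      rewrite mul_assoc, (sigma_rel_restrict (sigma_rel_sym Hu)), <- mul_assoc, U1 by objs.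
      reflexivity. }
    assert (Hxu' : m x (st u) = m x (st v)).
    { rewrite <- (star_idempotent Hx) at 1 2. rewrite <- !star_mul by objs. now rewrite Hux. }
    unfold theta. rewrite Hux, <- !mul_assoc by objs. now rewrite Hxu'.
  - exfalso. apply H. exists v. split; [apply sigma_rel_refl | exact Hv].
Qed.

Lemma alpha_pi_star_mul s : alpha (pi_sigma S s) (m (st s) s) = m s (st s).
Proof.
  rewrite alpha_pi by apply Xset_star_mul. unfold theta. assoc_l. now rewrite star_l.
Qed.

Lemma sdcod_to_semidirect s : sdcod (to_semidirect s) = (c s, c s).
Proof. unfold sdcod; simpl. rewrite qcod_pi, alpha_pi_star_mul. f_equal. objs. Qed.

(* Second component: alpha_{pi t*} (s* s . t t* ) = t* s* s t t* t = (st)* st. *)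
Lemma sdmul_to_semidirect s t : d s = c t ->
  sdmul (to_semidirect s) (to_semidirect t) = to_semidirect (m s t).
Proof.
  intro H. unfold sdmul.
  assert (Hraw : sdmul_raw (proj1_sig (to_semidirect s)) (proj1_sig (to_semidirect t))
                 = proj1_sig (to_semidirect (m s t))).
  { simpl. rewrite qmul_pi by exact H. rewrite alpha_pi_star_mul, qstar_pi, alpha_pi.
    - f_equal. unfold theta. rewrite star_involutive, star_mul by exact H.
      transitivity (m (m (m (st t) (st s)) s) (m (m t (st t)) t)); [assoc_l; reflexivity|].
      rewrite star_l. assoc_l. reflexivity.
    - rewrite star_involutive. split.
      + apply idempotent_mul; [apply idempotent_star_mul | apply idempotent_mul_star | objs].
      + rewrite (idempotent_comm (idempotent_star_mul s) (idempotent_mul_star t)) by objs.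
        apply nat_le_mul_idempotent; [apply idempotent_star_mul | objs]. }
  destruct (excluded_middle_informative _) as [H1|H1].
  - exact (subset_eq_compat _ _ _ _ _ _ Hraw).
  - exfalso. apply H1. rewrite Hraw. exact (proj2_sig (to_semidirect (m s t))).
Qed.

Lemma to_semidirect_injective s t : to_semidirect s = to_semidirect t -> s = t.
Proof.
  intro H. apply (f_equal (@proj1_sig _ _)) in H. simpl in H. injection H as Hpi Hsrc.
  assert (Hst : sigma_rel S s t).
  { change (sigma_class S s t). rewrite Hpi. apply sigma_rel_refl. }
  transitivity (m s (m (st s) s)); [assoc_l; now rewrite star_l|].
  rewrite Hsrc, (sigma_rel_restrict Hst), Hsrc. assoc_l. now rewrite star_l.
Qed.

End EUnitary.
End InverseSemigroupoid.

Theorem mainTheorem14 (S : InvSemigroupoid) (HE : E_unitary S) :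
  exists phi : arr S -> sdarr S,
    (forall s, proj1_sig (phi s) = (pi_sigma S s, mul S (star S s) s)) /\
    is_sg_isomorphism (dom S) (cod S) (mul S)
                      (@sddom S) (@sdcod S) (@sdmul S) phi.
Proof.
  exists (@to_semidirect S). split; [reflexivity|].
  apply bijective_morphism_isomorphism.
  - intros s t H.
    rewrite sddom_to_semidirect, (sdcod_to_semidirect HE), (sdmul_to_semidirect HE s t H).
    split; congruence.
  - intros s t H. rewrite sddom_to_semidirect, (sdcod_to_semidirect HE) in H. congruence.
  - exact (to_semidirect_injective HE).
  - apply to_semidirect_surjective.
Qed.
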